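(* Let $\mathcal A\subseteq E^\infty$, let $V\subseteq E$ be a block subspace, $\vec v$ a finite block sequence and $T$ a $(V,\vec v)$-rule, and suppose that for every block subspace $W\subseteq V$, player I has no strategy in $B^T_W(\vec v)$ to play in $\mathcal A$. (a) If $|\vec v|$ is odd, then there is a block subspace $X\subseteq V$ such that for every block subspace $Y\subseteq X$ there is $x\in Y$ with $\vec v\,\hat{}\,x\in T$ such that for every block subspace $W\subseteq X$, player I has no strategy in $B^T_W(\vec v\,\hat{}\,x)$ to play in $\mathcal A$. (b) If $|\vec v|$ is even, then there is a block subspace $X\subseteq V$ with $\vec v\,\hat{}\,x\in T$ for all non-zero $x\in X$, such that for every non-zero $x\in X$ and every block subspace $W\subseteq X$, player I has no strategy in $B^T_W(\vec v\,\hat{}\,x)$ to play in $\mathcal A$.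
   Context: Fix a countable field $\mathfrak F$ and let $E$ be the countable-dimensional $\mathfrak F$-vector space with basis $(e_n)$. For non-zero $x=\sum a_ne_n$, ${\rm supp}\,x=\{n:a_n\neq0\}$. A block sequence is a sequence of non-zero vectors with $\max{\rm supp}\,x_n<\min{\rm supp}\,x_{n+1}$. ''Subspace'' means an infinite-dimensional block subspace of $E$; vectors played are non-zero. For a subspace $X$, $X[k]=\{x\in X\setminus\{0\}:k<\min{\rm supp}\,x\}$. $E^\infty=E^{\mathbb N}$ with the product of discrete topologies; $E^{<\infty}$ is the set of finite block sequences; $\hat{}$ is concatenation; $T_{\vec x}=\{\vec y:\vec x\,\hat{}\,\vec y\in T\}$. Game $B_V(\vec v)$: if $|\vec v|$ is even: II plays a subspace $Z_0\subseteq V$; I plays non-zero $x_0\in Z_0$ and $n_0\in\mathbb N$; II plays non-zero $y_0\in V[n_0]$ and a subspace $Z_1\subseteq V$; I plays $x_1\in Z_1$, $n_1$; II plays $y_1\in V[n_1]$, $Z_2$; etc.; outcome $\vec v\,\hat{}\,(x_0,y_0,x_1,y_1,\dots)$. If $|\vec v|$ is odd: I plays $n_0$; II plays $y_0\in V[n_0]$ and $Z_0\subseteq V$; I plays $x_0\in Z_0$ and $n_1$; II plays $y_1\in V[n_1]$ and $Z_1$; etc.; outcome $\vec v\,\hat{}\,(y_0,x_0,y_1,x_1,\dots)$. A $(V,\vec v)$-rule is a set $T\subseteq E^{<\infty}$ with $\vec v\in T$ such that: (i) if $\vec y\in T$, $|\vec y|$ odd, then for every subspace $Z\subseteq V$ there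 is $z\in Z$ with $\vec y\,\hat{}\,z\in T$; (ii) if $\vec y\in T$, $|\vec y|$ even, then there is $n$ with $\vec y\,\hat{}\,z\in T$ for all $z\in V[n]$. The $T$-induced subgame $B^T_V(\vec v)$ is played as $B_V(\vec v)$ with the additional requirement that every position, i.e. the finite sequence of vectors played so far listed in the order they appear in the outcome, belongs to $T_{\vec v}$. A strategy to play in $\mathcal A$ is one all of whose outcomes lie in $\mathcal A$. *)

From HB Require Import structures.
From mathcomp Require Import all_boot all_order all_algebra.
Set Implicit Arguments. Unset Strict Implicit. Unset Printing Implicit Defensive.
Import Order.TTheory GRing.Theory Num.Theory.
Local Open Scope ring_scope.

(* E = countable-dimensional F-vector space with basis (e_n); we realise it as
   {poly F}, e_n = 'X^n, so that the coefficient of e_n in x is x`_n. *)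
Section Defs.
Variable F : fieldType.
Notation E := {poly F}.

(* min supp x and max supp x (meaningful for x != 0) *)
Definition supp_min (x : E) : nat := find (fun a => a != 0) (x : seq F).
Definition supp_max (x : E) : nat := (size x).-1.

(* a (set-theoretic) subset of E; subspaces are represented this way *)
Definition subset_E := E -> Prop.
Definition sub_le (X Y : subset_E) : Prop := forall x, X x -> Y x.

Definition tail_of (X : subset_E) (k : nat) : subset_E :=
  fun x => X x /\ x != 0 /\ (k < supp_min x)%N.

Definition is_block (z : nat -> E) : Prop :=
  forall n, z n != 0 /\ (supp_max (z n) < supp_min (z n.+1))%N.

Definition is_fblock (s : seq E) : Prop :=
  all (fun a => a != 0) s /\ sorted (fun a b => supp_max a < supp_min b)%N s.

Definition span_of (z : nat -> E) : subset_E :=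
  fun x => exists (n : nat) (c : nat -> F), x = \sum_(i < n) c i *: z i.

(* "subspace" = infinite-dimensional block subspace *)
Definition is_subspace (X : subset_E) : Prop :=
  exists z, is_block z /\ forall x, X x <-> span_of z x.

Definition is_rule (V : subset_E) (v : seq E) (T : seq E -> Prop) : Prop :=
  [/\ (forall s, T s -> is_fblock s),
      T v,
      (forall y, T y -> odd (size y) ->
         forall Z, is_subspace Z -> sub_le Z V -> exists z, Z z /\ T (rcons y z))
    & (forall y, T y -> ~~ odd (size y) ->
         exists n : nat, forall z, tail_of V n z -> T (rcons y z))].

(* outcome of a play: v followed by a0, b0, a1, b1, ... *)
Definition outcome (v : seq E) (a b : nat -> E) : nat -> E :=
  fun k => if (k < size v)%N then nth 0 v k
           else let j := (k - size v)%N in if odd j then b j./2 else a j./2.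

Definition prefix (out : nat -> E) (m : nat) : seq E := mkseq out m.

(* ---- the game B^T_W(v), |v| even ----
   round k: II plays y_{k-1} in W[n_{k-1}] (if k >= 1) and Z_k subset W;
            I plays x_k in Z_k \ {0} and n_k.
   A strategy of I: sigma (y_0..y_{k-1}) (Z_0..Z_k) = (x_k, n_k). *)
Definition I_wins_even (W : subset_E) (v : seq E) (T : seq E -> Prop)
  (A : (nat -> E) -> Prop) (sigma : seq E -> seq subset_E -> E * nat) : Prop :=
  forall (y : nat -> E) (Z : nat -> subset_E),
    let x := fun k => (sigma (mkseq y k) (mkseq Z k.+1)).1 in
    let n := fun k => (sigma (mkseq y k) (mkseq Z k.+1)).2 in
    let out := outcome v x y in
    let II_legal := fun k =>
      is_subspace (Z k) /\ sub_le (Z k) W /\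
      (forall j, k = j.+1 ->
         tail_of W (n j) (y j) /\ T (prefix out (size v + 2 * j + 2))) in
    let I_legal := fun k =>
      Z k (x k) /\ x k != 0 /\ T (prefix out (size v + 2 * k + 1)) in
    (forall k, (forall i, (i <= k)%N -> II_legal i) -> I_legal k) /\
    ((forall k, II_legal k) -> A out).

(* ---- the game B^T_W(v), |v| odd ----
   I plays n_0; round k: II plays y_k in W[n_k] and Z_k subset W;
   I plays x_k in Z_k \ {0} and n_{k+1}.
   A strategy of I: n_0 together with
   sigma (y_0..y_k) (Z_0..Z_k) = (x_k, n_{k+1}). *)
Definition I_wins_odd (W : subset_E) (v : seq E) (T : seq E -> Prop)
  (A : (nat -> E) -> Prop) (n0 : nat)
  (sigma : seq E -> seq subset_E -> E * nat) : Prop :=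
  forall (y : nat -> E) (Z : nat -> subset_E),
    let x := fun k => (sigma (mkseq y k.+1) (mkseq Z k.+1)).1 in
    let n := fun k => match k with
                      | 0 => n0
                      | j.+1 => (sigma (mkseq y j.+1) (mkseq Z j.+1)).2 end in
    let out := outcome v y x in
    let II_legal := fun k =>
      is_subspace (Z k) /\ sub_le (Z k) W /\
      tail_of W (n k) (y k) /\ T (prefix out (size v + 2 * k + 1)) in
    let I_legal := fun k =>
      Z k (x k) /\ x k != 0 /\ T (prefix out (size v + 2 * k + 2)) in
    (forall k, (forall i, (i <= k)%N -> II_legal i) -> I_legal k) /\
    ((forall k, II_legal k) -> A out).

Definition I_has_strategy (W : subset_E) (v : seq E) (T : seq E -> Prop)
  (A : (nat -> E) -> Prop) : Prop :=
  if odd (size v) then exists n0 sigma, I_wins_odd W v T A n0 sigma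
  else exists sigma, I_wins_even W v T A sigma.

End Defs.

From Pilot Require Import Defs.
From HB Require Import structures.
From mathcomp Require Import all_boot all_order all_algebra zify.
From Stdlib Require Import Classical ClassicalEpsilon FunctionalExtensionality.
Set Implicit Arguments. Unset Strict Implicit. Unset Printing Implicit Defensive.
Import Order.TTheory GRing.Theory Num.Theory.
Local Open Scope ring_scope.

(* The proof is a diagonalisation over the countable space E = {poly F}.
   1. Support calculus: block sequences have increasing supports, block
      subspaces are linear, and every block subspace W has, for each m, a
      block subspace [shrink W m] <= W whose non-zero vectors live beyond m.
   2. Transfer: if every non-zero vector of W' supported beyond m lies in W,
      a strategy of I in B^T_W(u) yields one in B^T_{W'}(u) (shrink II's
      subspaces beyond m, raise I's integers to m).
   3. Composition: at an even position, if every subspace offered by II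
      contains a legal answer a with I winning B^T_D(u ++ [a]), then I wins
      B^T_D(u); at an odd position, if I wins B^T_Y(u ++ [a]) for every legal
      a in Y, then I wins B^T_Y(u).
   4. Stabilisation: for any transfer-invariant property of (subspace,
      vector) pairs, enumerating E and diagonalising a decreasing chain of
      subspaces gives D <= V in which the property of a in some W <= D
      implies it in D itself.
   The two parts of the theorem then follow by contradiction from 2-4,
   taking X = D for V (odd case) and for V[n] (even case). *)

Section Supports.
Variable F : fieldType.
Implicit Types (x : {poly F}) (z : nat -> {poly F}).

Lemma coef_lt_supp_min x p : (p < supp_min x)%N -> x`_p = 0.
Proof. by move=> /(before_find 0) /negbFE /eqP. Qed.

Lemma coef_gt_supp_max x p : (supp_max x < p)%N -> x`_p = 0.
Proof. by rewrite /supp_max => H; apply: nth_default; case: (size x) H. Qed.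

Lemma coef_supp_min x : x != 0 -> x`_(supp_min x) != 0.
Proof.
move=> nx; apply: (@nth_find _ 0 (fun a => a != 0)); apply/hasP.
exists (lead_coef x); last by rewrite lead_coef_eq0.
by rewrite lead_coefE mem_nth // prednK // lt0n size_poly_eq0.
Qed.

Lemma supp_min_le_max x : x != 0 -> (supp_min x <= supp_max x)%N.
Proof.
move=> nx; rewrite leqNgt; apply/negP => /coef_gt_supp_max.
by move/eqP; rewrite (negbTE (coef_supp_min nx)).
Qed.

Lemma supp_min_gt x m :
  x != 0 -> (forall q, (q <= m)%N -> x`_q = 0) -> (m < supp_min x)%N.
Proof.
move=> nx H; rewrite ltnNge; apply/negP => /H /eqP.
by rewrite (negbTE (coef_supp_min nx)).
Qed.

Section BlockSequence.
Variable z : nat -> {poly F}.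
Hypothesis bz : is_block z.

Lemma block_lt i j : (i < j)%N -> (supp_max (z i) < supp_min (z j))%N.
Proof.
elim: j => // j IH; rewrite ltnS leq_eqVlt => /orP [/eqP <-|lt]; first by case: (bz i).
apply: leq_trans (IH lt) _; apply: leq_trans (supp_min_le_max (proj1 (bz j))) _.
by case: (bz j) => _ /ltnW.
Qed.

Lemma block_supp_min_ge k : (k <= supp_min (z k))%N.
Proof.
elim: k => // k IH; apply: leq_ltn_trans IH _.
by apply: leq_ltn_trans (supp_min_le_max (proj1 (bz k))) _; case: (bz k).
Qed.

(* The coordinate of a combination of the z_i at the support minimum of z_j
   only sees the j-th term: block vectors are "independent by support". *)
Lemma coef_block_comb n (c : nat -> F) j : (j < n)%N ->
  (\sum_(i < n) c i *: z i)`_(supp_min (z j)) = c j * (z j)`_(supp_min (z j)).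
Proof.
move=> jn; rewrite coef_sum (bigD1 (Ordinal jn)) //= coefZ big1 ?addr0 //.
move=> i /eqP neq; rewrite coefZ.
have : nat_of_ord i != j by apply/eqP => e; apply: neq; apply: val_inj.
rewrite neq_ltn => /orP [lt|lt]; first by rewrite coef_gt_supp_max ?mulr0 // block_lt.
rewrite coef_lt_supp_min ?mulr0 //.
exact: leq_ltn_trans (supp_min_le_max (proj1 (bz j))) (block_lt lt).
Qed.

End BlockSequence.

End Supports.

Section BlockSubspaces.
Variable F : fieldType.
Implicit Types (x : {poly F}) (z : nat -> {poly F}).

Lemma span_widen z n N (c : nat -> F) : (n <= N)%N ->
  \sum_(i < n) c i *: z i = \sum_(i < N) (if (i < n)%N then c i else 0) *: z i.
Proof.
move=> le; rewrite (big_ord_widen N (fun i => c i *: z i) le) big_mkcond.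
by apply: eq_bigr => i _; case: ifP => //; rewrite scale0r.
Qed.

Lemma span0 z : span_of z 0.
Proof. by exists 0%N, (fun _ => 0); rewrite big_ord0. Qed.

Lemma spanD z x y : span_of z x -> span_of z y -> span_of z (x + y).
Proof.
move=> [n1 [c1 ->]] [n2 [c2 ->]].
rewrite (span_widen _ _ (leq_maxl n1 n2)) (span_widen _ _ (leq_maxr n1 n2)).
exists (maxn n1 n2), (fun i => (if (i < n1)%N then c1 i else 0) +
                               (if (i < n2)%N then c2 i else 0)).
by rewrite -big_split /=; apply: eq_bigr => i _; rewrite scalerDl.
Qed.

Lemma spanZ z a x : span_of z x -> span_of z (a *: x).
Proof.
move=> [n [c ->]]; exists n, (fun i => a * c i).
by rewrite scaler_sumr; apply: eq_bigr => i _; rewrite scalerA.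
Qed.

Lemma span_gen z k : span_of z (z k).
Proof.
exists k.+1, (fun i => if i == k then 1 else 0).
rewrite big_ord_recr /= eqxx scale1r big1 ?add0r // => i _.
by rewrite (ltn_eqF (ltn_ord i)) scale0r.
Qed.

Lemma span_shift z K x : span_of (fun i => z (i + K)%N) x -> span_of z x.
Proof.
move=> [n [c ->]].
exists (K + n)%N, (fun j => if (K <= j)%N then c (j - K)%N else 0).
rewrite big_split_ord /= [X in _ = X + _]big1 ?add0r.
  by apply: eq_bigr => i _; rewrite leq_addr addKn addnC.
by move=> i _; rewrite leqNgt ltn_ord scale0r.
Qed.

Lemma subspace0 (W : subset_E F) : is_subspace W -> W 0.
Proof. by move=> [z [_ H]]; apply/H/span0. Qed.

Lemma subspaceZ (W : subset_E F) a x : is_subspace W -> W x -> W (a *: x).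
Proof. by move=> [z [_ H]] /H Hx; apply/H/spanZ. Qed.

Lemma subspace_sum (W : subset_E F) n (f : nat -> {poly F}) :
  is_subspace W -> (forall i, (i < n)%N -> W (f i)) -> W (\sum_(i < n) f i).
Proof.
move=> [z [_ H]] Hf; apply/H; apply: (big_ind (span_of z)).
- exact: span0.
- exact: spanD.
- by move=> i _; apply/H/Hf.
Qed.

Lemma subspace_far (W : subset_E F) m :
  is_subspace W -> exists d, W d /\ d != 0 /\ (m < supp_min d)%N.
Proof.
move=> [z [bz H]]; exists (z m.+1); split; first exact/H/span_gen.
by split; [case: (bz m.+1) | exact: block_supp_min_ge].
Qed.

Definition basis (W : subset_E F) : nat -> {poly F} :=
  epsilon (inhabits (fun _ => 0))
          (fun z => is_block z /\ forall x, W x <-> span_of z x).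

Lemma basisP (W : subset_E F) :
  is_subspace W -> is_block (basis W) /\ forall x, W x <-> span_of (basis W) x.
Proof. exact: epsilon_spec. Qed.

Definition shrink (W : subset_E F) (m : nat) : subset_E F :=
  span_of (fun i => basis W (i + m.+1)%N).

Lemma shrink_subspace (W : subset_E F) m : is_subspace W -> is_subspace (shrink W m).
Proof.
by move=> /basisP [bz _]; exists (fun i => basis W (i + m.+1)%N); split.
Qed.

Lemma shrink_le (W : subset_E F) m : is_subspace W -> sub_le (shrink W m) W.
Proof. by move=> /basisP [_ H] x /span_shift /H. Qed.

Lemma shrink_far (W : subset_E F) m x :
  is_subspace W -> shrink W m x -> x != 0 -> (m < supp_min x)%N.
Proof.
move=> /basisP [bz _] [n [c ->]] nx; apply: supp_min_gt => // q qm.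
rewrite coef_sum big1 // => i _; rewrite coefZ coef_lt_supp_min ?mulr0 //.
apply: leq_trans (block_supp_min_ge bz _); rewrite addnS ltnS.
exact: leq_trans qm (leq_addl _ _).
Qed.

End BlockSubspaces.

Section Plays.
Variable F : fieldType.
Notation E := {poly F}.
Variables (T : seq E -> Prop) (A : (nat -> E) -> Prop).
Implicit Types (x y : nat -> E) (W : subset_E F)
  (Z : nat -> subset_E F) (u : seq E).

(* The legality conditions and the winning condition of a single play of
   B^T_W(u), with the moves of both players given as sequences:
   x = I's vectors, n = I's integers, y = II's vectors, Z = II's subspaces. *)
Definition legal_II_odd W u x n y Z k :=
  is_subspace (Z k) /\ sub_le (Z k) W /\ tail_of W (n k) (y k) /\
  T (Defs.prefix (outcome u y x) (size u + 2 * k + 1)).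
Definition legal_I_odd u x y Z k :=
  Z k (x k) /\ x k != 0 /\ T (Defs.prefix (outcome u y x) (size u + 2 * k + 2)).
Definition I_wins_play_odd W u x n y Z :=
  (forall k, (forall i, (i <= k)%N -> legal_II_odd W u x n y Z i) ->
     legal_I_odd u x y Z k) /\
  ((forall k, legal_II_odd W u x n y Z k) -> A (outcome u y x)).

Definition legal_II_even W u x n y Z k :=
  is_subspace (Z k) /\ sub_le (Z k) W /\
  (forall j, k = j.+1 -> tail_of W (n j) (y j) /\
      T (Defs.prefix (outcome u x y) (size u + 2 * j + 2))).
Definition legal_I_even u x y Z k :=
  Z k (x k) /\ x k != 0 /\ T (Defs.prefix (outcome u x y) (size u + 2 * k + 1)).
Definition I_wins_play_even W u x n y Z :=
  (forall k, (forall i, (i <= k)%N -> legal_II_even W u x n y Z i) ->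
     legal_I_even u x y Z k) /\
  ((forall k, legal_II_even W u x n y Z k) -> A (outcome u x y)).

Lemma I_wins_evenE W u sig : I_wins_even W u T A sig <->
  forall y Z, I_wins_play_even W u (fun k => (sig (mkseq y k) (mkseq Z k.+1)).1)
                (fun k => (sig (mkseq y k) (mkseq Z k.+1)).2) y Z.
Proof. by []. Qed.

Lemma I_wins_oddE W u (n0 : nat) sig : I_wins_odd W u T A n0 sig <->
  forall y Z, I_wins_play_odd W u (fun k => (sig (mkseq y k.+1) (mkseq Z k.+1)).1)
     (fun k => if k is j.+1 then (sig (mkseq y j.+1) (mkseq Z j.+1)).2 else n0) y Z.
Proof. by []. Qed.

Definition sub_beyond (W' W : subset_E F) (m : nat) : Prop :=
  forall z, W' z -> z != 0 -> (m < supp_min z)%N -> W z.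

Lemma sub_le_beyond W' W m : sub_le W' W -> sub_beyond W' W m.
Proof. by move=> W'W z /W'W. Qed.

Section Transfer.
Variables (W W' : subset_E F) (m : nat).
Hypotheses (sW : is_subspace W) (W'W : sub_beyond W' W m).

(* A move (Y, y) of II that is legal in W', against I's bound raised to m,
   becomes legal in W once Y is shrunk beyond m. *)
Lemma shrink_sub_beyond (Y : subset_E F) :
  is_subspace Y -> sub_le Y W' -> sub_le (shrink Y m) W.
Proof.
move=> sY YW z zs; have [->|nz] := eqVneq z 0; first exact: subspace0 sW.
by apply: W'W nz (shrink_far sY zs nz); apply/YW; apply: shrink_le zs.
Qed.

Lemma tail_of_beyond k z : tail_of W' (maxn k m) z -> tail_of W k z.
Proof.
move=> [W'z [nz lt]]; split; last split => //.
  by apply: W'W => //; apply: leq_ltn_trans lt; apply: leq_maxr.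
by apply: leq_ltn_trans lt; apply: leq_maxl.
Qed.

Lemma I_wins_play_odd_transfer u x n y Z :
  I_wins_play_odd W u x n y (fun k => shrink (Z k) m) ->
  I_wins_play_odd W' u x (fun k => maxn (n k) m) y Z.
Proof.
move=> [Ilegal Iwins].
have legal : forall k, legal_II_odd W' u x (fun k => maxn (n k) m) y Z k ->
    legal_II_odd W u x n y (fun k => shrink (Z k) m) k.
  move=> k [sZ [ZW [tl Tk]]]; do 2?split; first exact: shrink_subspace.
    exact: shrink_sub_beyond.
  by split=> //; apply: tail_of_beyond.
split=> [k Hk|Hall]; last by apply: Iwins => k; apply: legal.
have [Zx [nx Tx]] := Ilegal k (fun i ik => legal i (Hk i ik)).
by split=> //; case: (Hk k (leqnn k)) => sZ _; apply: shrink_le Zx.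
Qed.

Lemma I_wins_play_even_transfer u x n y Z :
  I_wins_play_even W u x n y (fun k => shrink (Z k) m) ->
  I_wins_play_even W' u x (fun k => maxn (n k) m) y Z.
Proof.
move=> [Ilegal Iwins].
have legal : forall k, legal_II_even W' u x (fun k => maxn (n k) m) y Z k ->
    legal_II_even W u x n y (fun k => shrink (Z k) m) k.
  move=> k [sZ [ZW Hj]]; do 2?split; first exact: shrink_subspace.
    exact: shrink_sub_beyond.
  by move=> j kj; have [tl Tj] := Hj j kj; split=> //; apply: tail_of_beyond.
split=> [k Hk|Hall]; last by apply: Iwins => k; apply: legal.
have [Zx [nx Tx]] := Ilegal k (fun i ik => legal i (Hk i ik)).
by split=> //; case: (Hk k (leqnn k)) => sZ _; apply: shrink_le Zx.
Qed.

(* Transfer of strategies: I may simulate the W-strategy, answering each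
   subspace Z of II by the strategy's answer to shrink Z m and raising its
   integer moves to at least m.  Whether I has a strategy thus only depends
   on the subspace "beyond a finite part". *)
Lemma I_has_strategy_transfer u :
  I_has_strategy W u T A -> I_has_strategy W' u T A.
Proof.
pose shrink_m (Y : subset_E F) := shrink Y m.
pose lift (sig : seq E -> seq (subset_E F) -> E * nat) ys Zs :=
  let s := sig ys (map shrink_m Zs) in (s.1, maxn s.2 m).
have mkseq_shrink Z j : mkseq (fun k => shrink (Z k) m) j = map shrink_m (mkseq Z j).
  by rewrite /mkseq -map_comp.
rewrite /I_has_strategy; case: ifP => _.
  move=> [n0 [sig /I_wins_oddE Hs]]; exists (maxn n0 m), (lift sig).
  apply/I_wins_oddE => y Z.
  have := I_wins_play_odd_transfer (Hs y (fun k => shrink (Z k) m)).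
  congr I_wins_play_odd; apply: functional_extensionality => -[|k] //=;
    by rewrite mkseq_shrink.
move=> [sig /I_wins_evenE Hs]; exists (lift sig); apply/I_wins_evenE => y Z.
have := I_wins_play_even_transfer (Hs y (fun k => shrink (Z k) m)).
by congr I_wins_play_even; apply: functional_extensionality => k /=; rewrite mkseq_shrink.
Qed.

End Transfer.
End Plays.

Section Composition.
Variable F : fieldType.
Notation E := {poly F}.
Notation strategy := (seq E -> seq (subset_E F) -> E * nat).
Variables (T : seq E -> Prop) (A : (nat -> E) -> Prop).
Implicit Types (x y : nat -> E) (W D Y : subset_E F) (Z : nat -> subset_E F) (u : seq E).

Lemma outcome_rcons u (a b : nat -> E) :
  outcome u a b = outcome (rcons u (a 0%N)) b (fun k => a k.+1).
Proof.
apply: functional_extensionality => p; rewrite /outcome size_rcons nth_rcons ltnS.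
case: (ltngtP p (size u)) => [//|gt|->]; rewrite ?subnn //.
have -> : (p - size u = (p - (size u).+1).+1)%N by rewrite subnS prednK // subn_gt0.
by rewrite /= uphalf_half; case: odd.
Qed.

Lemma prefix_outcome u (a b : nat -> E) : Defs.prefix (outcome u a b) (size u) = u.
Proof.
apply: (@eq_from_nth _ 0) => [|i]; rewrite size_mkseq // => lt.
by rewrite nth_mkseq // /outcome lt.
Qed.

Lemma mkseq_cons (G : Type) (f : nat -> G) k :
  mkseq f k.+1 = f 0%N :: mkseq (fun i => f i.+1) k.
Proof. by rewrite /mkseq /= (iotaDl 1 0) -map_comp. Qed.

Lemma I_wins_play_even_rcons D u a0 x n y Z
  (xe := fun k => if k is j.+1 then x j else a0) :
  (legal_II_even T D u xe n y Z 0 -> Z 0%N a0 /\ a0 != 0 /\ T (rcons u a0)) ->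
  (legal_II_even T D u xe n y Z 0 ->
     I_wins_play_odd T A D (rcons u a0) x n y (fun j => Z j.+1)) ->
  I_wins_play_even T A D u xe n y Z.
Proof.
move=> Hfirst Hrest.
have Eo : outcome u xe y = outcome (rcons u a0) y x := outcome_rcons u xe y.
have legal j : legal_II_even T D u xe n y Z j.+1 ->
    legal_II_odd T D (rcons u a0) x n y (fun j => Z j.+1) j.
  move=> [sZ [ZD Hj]]; have [tl Tj] := Hj j erefl; do 3?split=> //.
  by rewrite -Eo size_rcons (_ : (size u).+1 + 2 * j + 1 = size u + 2 * j + 2)%N //; lia.
split=> [[|j] Hk|Hall].
- have [Za [na Ta]] := Hfirst (Hk 0%N (leqnn 0)); do 2?split=> //.
  have -> : (size u + 2 * 0 + 1 = size (rcons u a0))%N by rewrite size_rcons; lia.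
  by rewrite Eo prefix_outcome.
- have [Ilegal _] := Hrest (Hk 0%N isT).
  have [Zx [nx Tx]] := Ilegal j (fun i ij => legal i (Hk i.+1 ij)); do 2?split=> //.
  by rewrite Eo (_ : size u + 2 * j.+1 + 1 = size (rcons u a0) + 2 * j + 2)%N
    // size_rcons; lia.
- have [_ Iwins] := Hrest (Hall 0%N).
  by rewrite Eo; apply: Iwins => j; apply: legal.
Qed.

Lemma I_wins_play_odd_rcons Y u x ne y Z
  (no := fun k => if k is j.+1 then ne j else 0%N) :
  (legal_II_odd T Y u x no y Z 0 ->
     I_wins_play_even T A Y (rcons u (y 0%N)) x ne (fun k => y k.+1) Z) ->
  I_wins_play_odd T A Y u x no y Z.
Proof.
move=> Hrest.
have Eo : outcome u y x = outcome (rcons u (y 0%N)) x (fun k => y k.+1) :=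
  outcome_rcons u y x.
have legal k : legal_II_odd T Y u x no y Z k ->
    legal_II_even T Y (rcons u (y 0%N)) x ne (fun k => y k.+1) Z k.
  move=> [sZ [ZY [tl Tk]]]; split=> //; split=> // j kj; subst k; split=> //.
  by rewrite -Eo size_rcons (_ : (size u).+1 + 2 * j + 2 = size u + 2 * j.+1 + 1)%N //; lia.
split=> [k Hk|Hall].
  have [Ilegal _] := Hrest (Hk 0%N isT).
  have [Zx [nx Tx]] := Ilegal k (fun i ik => legal i (Hk i ik)); do 2?split=> //.
  by rewrite Eo (_ : size u + 2 * k + 2 = size (rcons u (y 0%N)) + 2 * k + 1)%N
    // size_rcons; lia.
have [_ Iwins] := Hrest (Hall 0%N).
by rewrite Eo; apply: Iwins => j; apply: legal.
Qed.

Definition odd_strategy W u : nat * strategy :=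
  epsilon (inhabits (0%N, fun _ _ => (0, 0%N)))
          (fun p => I_wins_odd W u T A p.1 p.2).

Lemma odd_strategyP W u : odd (size u) -> I_has_strategy W u T A ->
  I_wins_odd W u T A (odd_strategy W u).1 (odd_strategy W u).2.
Proof.
rewrite /I_has_strategy => -> [n0 [sig Hs]].
exact: (epsilon_spec _ (fun p => I_wins_odd W u T A p.1 p.2) (ex_intro _ (n0, sig) Hs)).
Qed.

Definition even_strategy W u : strategy :=
  epsilon (inhabits (fun _ _ => (0, 0%N))) (I_wins_even W u T A).

Lemma even_strategyP W u : ~~ odd (size u) -> I_has_strategy W u T A ->
  I_wins_even W u T A (even_strategy W u).
Proof. by rewrite /I_has_strategy => /negbTE ->; apply: epsilon_spec. Qed.

Lemma I_has_strategy_even D u : ~~ odd (size u) ->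
  (forall Y, is_subspace Y -> sub_le Y D -> exists a, Y a /\ a != 0 /\
     T (rcons u a) /\ I_has_strategy D (rcons u a) T A) ->
  I_has_strategy D u T A.
Proof.
move=> ev H.
pose good Y a := Y a /\ a != 0 /\ T (rcons u a) /\ I_has_strategy D (rcons u a) T A.
pose answer Y := epsilon (inhabits 0) (good Y).
have answerP Y : is_subspace Y -> sub_le Y D -> good Y (answer Y).
  by move=> sY YD; apply: epsilon_spec; apply: H.
pose st a := odd_strategy D (rcons u a).
(* I answers II's first subspace Z0 by a0 = answer Z0, then follows the
   chosen strategy from u ++ [a0] on the remaining moves. *)
pose sigma : strategy := fun ys Zs => if Zs is Z0 :: Zr then
  if ys is [::] then (answer Z0, (st (answer Z0)).1) else (st (answer Z0)).2 ys Zr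
  else (0, 0%N).
rewrite /I_has_strategy (negbTE ev); exists sigma; apply/I_wins_evenE => y Z.
set a0 := answer (Z 0%N).
have sigmaS j : sigma (mkseq y j.+1) (mkseq Z j.+2) =
    (st a0).2 (mkseq y j.+1) (mkseq (fun i => Z i.+1) j.+1).
  by rewrite (mkseq_cons Z) (mkseq_cons y).
pose x j := ((st a0).2 (mkseq y j.+1) (mkseq (fun i => Z i.+1) j.+1)).1.
pose n k := if k is j.+1
  then ((st a0).2 (mkseq y j.+1) (mkseq (fun i => Z i.+1) j.+1)).2 else (st a0).1.
have : I_wins_play_even T A D u (fun k => if k is j.+1 then x j else a0) n y Z.
  apply: I_wins_play_even_rcons => -[sZ [ZD _]];
    have [Za [na [Ta Ha]]] := answerP _ sZ ZD; first by [].
  have odd_a0 : odd (size (rcons u a0)) by rewrite size_rcons /= ev.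
  by move/I_wins_oddE: (odd_strategyP odd_a0 Ha); apply.
by congr I_wins_play_even; apply: functional_extensionality => -[|j];
  rewrite /x /n ?sigmaS.
Qed.

Lemma I_has_strategy_odd Y u : odd (size u) ->
  (forall a, Y a -> a != 0 -> T (rcons u a) -> I_has_strategy Y (rcons u a) T A) ->
  I_has_strategy Y u T A.
Proof.
move=> od H.
pose se a := even_strategy Y (rcons u a).
(* After II's first vector y0, I follows the chosen strategy from u ++ [y0]. *)
pose sigma : strategy := fun ys Zs => if ys is y0 :: yr then se y0 yr Zs else (0, 0%N).
rewrite /I_has_strategy od; exists 0%N, sigma; apply/I_wins_oddE => y Z.
pose x k := (se (y 0%N) (mkseq (fun i => y i.+1) k) (mkseq Z k.+1)).1.
pose ne k := (se (y 0%N) (mkseq (fun i => y i.+1) k) (mkseq Z k.+1)).2.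
have : I_wins_play_odd T A Y u x (fun k => if k is j.+1 then ne j else 0%N) y Z.
  apply: I_wins_play_odd_rcons => -[sZ [ZY [[Yy [ny _]] Ty]]].
  have Ty0 : T (rcons u (y 0%N)).
    by move: Ty; rewrite (outcome_rcons u y x) (_ : size u + 2 * 0 + 1 =
      size (rcons u (y 0%N)))%N ?prefix_outcome // size_rcons; lia.
  have even_y0 : ~~ odd (size (rcons u (y 0%N))) by rewrite size_rcons /= od.
  by move/I_wins_evenE: (even_strategyP even_y0 (H _ Yy ny Ty0)); apply.
by congr I_wins_play_odd; apply: functional_extensionality => -[|k];
  rewrite /x /ne /sigma ?(mkseq_cons y).
Qed.

End Composition.

Section Diagonalisation.
Variable F : countFieldType.
Notation E := {poly F}.

(* A property of (subspace, vector) pairs which, like "I has a strategy in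
   B^T_W(v ++ [a])", passes from W to every W' lying in W beyond some m. *)
Variable good : subset_E F -> E -> Prop.
Hypothesis good_transfer : forall W W' m a,
  is_subspace W -> sub_beyond W' W m -> good W a -> good W' a.
Variable V : subset_E F.
Hypothesis sV : is_subspace V.

Definition enum_E (k : nat) : E := odflt 0 (unpickle k).

Definition good_below (U : subset_E F) (a : E) (W : subset_E F) :=
  is_subspace W /\ sub_le W U /\ good W a.

Definition refine (U : subset_E F) (a : E) : subset_E F :=
  if excluded_middle_informative (exists W, good_below U a W)
  then epsilon (inhabits U) (good_below U a) else U.

Lemma refineP U a : is_subspace U ->
  is_subspace (refine U a) /\ sub_le (refine U a) U /\
  ((exists W, good_below U a W) -> good (refine U a) a).
Proof.
rewrite /refine; case: excluded_middle_informative => [ex|nex] sU.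
  by have [? [? ?]] := epsilon_spec (inhabits U) _ ex.
by do 2?split=> //.
Qed.

(* The decreasing chain V = W_0 >= W_1 >= ..., where W_{k+1} decides the
   k-th vector of the enumeration. *)
Fixpoint chain (k : nat) : subset_E F :=
  if k is j.+1 then refine (chain j) (enum_E j) else V.

Lemma chain_subspace k : is_subspace (chain k).
Proof. by elim: k => //= k IH; case: (refineP (enum_E k) IH). Qed.

Lemma chain_le i j : (i <= j)%N -> sub_le (chain j) (chain i).
Proof.
elim: j => [|j IH]; first by rewrite leqn0 => /eqP ->.
rewrite leq_eqVlt => /orP [/eqP -> //|]; rewrite ltnS => /IH le x Hx.
by apply: le; case: (refineP (enum_E j) (chain_subspace j)) => _ [+ _]; apply.
Qed.

Definition far (W : subset_E F) (m : nat) : E :=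
  epsilon (inhabits 0) (fun d => W d /\ d != 0 /\ (m < supp_min d)%N).

Lemma farP W m : is_subspace W -> W (far W m) /\ far W m != 0 /\ (m < supp_min (far W m))%N.
Proof. by move=> sW; exact: (epsilon_spec _ _ (subspace_far m sW)). Qed.

Fixpoint diag_seq (k : nat) : E :=
  far (chain k.+1) (if k is j.+1 then supp_max (diag_seq j) else 0%N).

Lemma diag_seq_in k : chain k.+1 (diag_seq k) /\ diag_seq k != 0.
Proof.
have := farP (if k is j.+1 then supp_max (diag_seq j) else 0%N) (chain_subspace k.+1).
by case: k => [|k] [? [? _]].
Qed.

Lemma diag_seq_block : is_block diag_seq.
Proof.
move=> k; split; first by case: (diag_seq_in k).
by rewrite /=; case: (farP (supp_max (diag_seq k)) (chain_subspace k.+2)) => _ [].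
Qed.

Definition diag : subset_E F := span_of diag_seq.

Lemma diag_subspace : is_subspace diag.
Proof. by exists diag_seq; split => //; exact: diag_seq_block. Qed.

Lemma diag_in_chain k z : diag z ->
  (forall j, (j < k)%N -> z`_(supp_min (diag_seq j)) = 0) -> chain k.+1 z.
Proof.
move=> [n [c ->]] H; apply: (subspace_sum (f := fun i => c i *: diag_seq i)).
  exact: chain_subspace.
move=> i ilt; have [ik|ki] := ltnP i k.
  have := H i ik; rewrite coef_block_comb //; last exact: diag_seq_block.
  move=> /eqP; rewrite mulf_eq0 => /orP [/eqP ->|cd].
    by rewrite scale0r; apply: subspace0 (chain_subspace _).
  by have [_ /coef_supp_min] := diag_seq_in i; rewrite cd.
apply: subspaceZ; first exact: chain_subspace.
by apply: (@chain_le k.+1 i.+1) => //; case: (diag_seq_in i).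
Qed.

Lemma diag_le : sub_le diag V.
Proof. by move=> z Dz; apply: (@chain_le 0 1) => //; exact: (@diag_in_chain 0). Qed.

Lemma diag_sub_beyond k : sub_beyond diag (chain k.+1) (supp_max (diag_seq k)).
Proof.
move=> z Dz nz lt; apply: diag_in_chain => // j jk; apply: coef_lt_supp_min.
apply: leq_ltn_trans lt; apply: leq_trans (supp_min_le_max (proj2 (diag_seq_in j))) _.
apply/ltnW/(leq_trans (block_lt diag_seq_block jk)).
exact: supp_min_le_max (proj2 (diag_seq_in k)).
Qed.

(* Indeed, a = enum_E k is then good in
   a subspace of W_k, hence in W_{k+1}, hence in the diagonal space. *)
Lemma diag_stable W a : is_subspace W -> sub_le W diag -> good W a -> good diag a.
Proof.
move=> sW WD gW; pose k := pickle a; pose m := supp_max (diag_seq k).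
have ea : enum_E k = a by rewrite /enum_E pickleK.
have below : good_below (chain k) a (shrink W m).
  split; first exact: shrink_subspace.
  split; last by apply: (@good_transfer W _ 0 _ sW _ gW) => z zs _ _; apply: shrink_le zs.
  move=> z zs; have [->|nz] := eqVneq z 0; first exact: subspace0 (chain_subspace _).
  apply: (@chain_le k k.+1) => //; apply: diag_sub_beyond nz (shrink_far sW zs nz).
  by apply: WD; apply: shrink_le zs.
have : good (chain k.+1) a.
  by rewrite /= ea; case: (refineP a (chain_subspace k)) => _ [_]; apply; exists (shrink W m).
by move/good_transfer; apply; [apply: chain_subspace | apply: diag_sub_beyond].
Qed.

End Diagonalisation.

Lemma stable_subspace (F : countFieldType) (good : subset_E F -> {poly F} -> Prop)
  (V : subset_E F) :
  (forall W W' m a, is_subspace W -> sub_beyond W' W m -> good W a -> good W' a) ->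
  is_subspace V ->
  exists D, is_subspace D /\ sub_le D V /\
    forall W a, is_subspace W -> sub_le W D -> good W a -> good D a.
Proof.
move=> good_transfer sV; exists (diag good V); split; first exact: diag_subspace.
by split; [exact: diag_le | exact: diag_stable].
Qed.

Section MainArgument.
Variable F : countFieldType.
Notation E := {poly F}.
Variables (T : seq E -> Prop) (A : (nat -> E) -> Prop) (V : subset_E F) (v : seq E).
Hypothesis sV : is_subspace V.

Lemma stable_strategy_subspace (U : subset_E F) : is_subspace U ->
  exists D, is_subspace D /\ sub_le D U /\ forall W a,
    is_subspace W -> sub_le W D ->
    I_has_strategy W (rcons v a) T A -> I_has_strategy D (rcons v a) T A.
Proof.
by apply: stable_subspace => W W' m a sW W'W; exact: (I_has_strategy_transfer sW W'W).
Qed.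

Hypothesis noV : forall W, is_subspace W -> sub_le W V -> ~ I_has_strategy W v T A.

(* Part (a): take X = D.  If some Y <= D admitted no good answer x, then I
   would win B^T_D(v ++ [x]) for every legal x in Y, hence B^T_Y(v ++ [x]) by
   transfer, hence B^T_Y(v) by composition. *)
Lemma theorem_odd_part : odd (size v) ->
  exists X, is_subspace X /\ sub_le X V /\
    forall Y, is_subspace Y -> sub_le Y X ->
      exists x, Y x /\ T (rcons v x) /\
        forall W, is_subspace W -> sub_le W X -> ~ I_has_strategy W (rcons v x) T A.
Proof.
move=> od; have [D [sD [DV Dstable]]] := stable_strategy_subspace sV.
exists D; split=> //; split=> // Y sY YD; apply: NNPP => noanswer.
apply: (noV sY (fun z Yz => DV z (YD z Yz))).
apply: I_has_strategy_odd od _ => a Ya na Ta; apply: NNPP => noY.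
apply: noanswer; exists a; split=> //; split=> // W sW WD wW; apply: noY.
exact: (I_has_strategy_transfer sD (sub_le_beyond (m := 0) YD) (Dstable W a sW WD wW)).
Qed.

(* Part (b): take X = D inside V[n], where every vector is a legal move.  If
   every Y <= D contained a vector x from which I wins in some W <= Y, then
   I would win in D from each such x, hence B^T_D(v) by composition. *)
Lemma theorem_even_part n : ~~ odd (size v) ->
  (forall z, tail_of V n z -> T (rcons v z)) ->
  exists X, is_subspace X /\ sub_le X V /\
    (forall x, X x -> x != 0 -> T (rcons v x)) /\
    forall x, X x -> x != 0 ->
      forall W, is_subspace W -> sub_le W X -> ~ I_has_strategy W (rcons v x) T A.
Proof.
move=> ev Tn.
have [D [sD [Dshrink Dstable]]] := stable_strategy_subspace (shrink_subspace n sV).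
have DV : sub_le D V by move=> z /Dshrink /(shrink_le sV).
have TD x : D x -> x != 0 -> T (rcons v x).
  move=> Dx nx; apply: Tn; split; first exact: DV.
  by split=> //; apply: shrink_far sV (Dshrink x Dx) nx.
apply: NNPP => noX; apply: (noV sD DV).
apply: I_has_strategy_even ev _ => Y sY YD; apply: NNPP => noanswer.
apply: noX; exists Y; split=> //; split; first by move=> z /YD /DV.
split=> [x /YD|x Yx nx W sW WY wW]; first exact: TD.
apply: noanswer; exists x; split=> //; split=> //; split; first by apply: TD => //; apply: YD.
by apply: (Dstable W) wW => // z /WY /YD.
Qed.

End MainArgument.

Theorem mainTheorem6 (F : countFieldType) (A : (nat -> {poly F}) -> Prop)
  (V : subset_E F) (v : seq {poly F}) (T : seq {poly F} -> Prop) :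
  is_subspace V -> is_fblock v -> is_rule V v T ->
  (forall W, is_subspace W -> sub_le W V -> ~ I_has_strategy W v T A) ->
  (odd (size v) ->
     exists X, is_subspace X /\ sub_le X V /\
       forall Y, is_subspace Y -> sub_le Y X ->
         exists x, Y x /\ T (rcons v x) /\
           forall W, is_subspace W -> sub_le W X ->
             ~ I_has_strategy W (rcons v x) T A) /\
  (~~ odd (size v) ->
     exists X, is_subspace X /\ sub_le X V /\
       (forall x, X x -> x != 0%R -> T (rcons v x)) /\
       forall x, X x -> x != 0%R ->
         forall W, is_subspace W -> sub_le W X ->
           ~ I_has_strategy W (rcons v x) T A).
Proof.
move=> sV _ [_ Tv _ rule_even] noV; split; first exact: theorem_odd_part.
by move=> ev; have [n Tn] := rule_even v Tv ev; exact: theorem_even_part Tn.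
Qed.
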